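(* Suppose Assumption 1 below holds and $F$ is concave and continuous (real-valued) on an open neighbourhood of $\lambda(\Theta)$. Let $\theta^*\in\Theta$ be a first-order stationary point of $\max_{\theta\in\Theta}F(\lambda(\theta))$, i.e. there exists $u^*\in\hat\partial(F\circ\lambda)(\theta^* )$ with $\langle u^*,\theta-\theta^*\rangle\le0$ for all $\theta\in\Theta$. Then $\theta^*$ is a globally optimal solution of $\max_{\theta\in\Theta}F(\lambda(\theta))$. Assumption 1: (i) $\lambda(\cdot)$ is a bijection between $\Theta$ and $\lambda(\Theta)$, and both $\Theta$ and $\lambda(\Theta)$ are closed and convex; (ii) $\lambda(\cdot)$ is differentiable on $\Theta$ with Lipschitz continuous Jacobian $\nabla_\theta\lambda(\theta)$; (iii) the inverse map $g:=\lambda^{-1}:\lambda(\Theta)\to\Theta$ satisfies $\|g(\lambda)-g(\lambda')\|\le\ell_\theta\,|\!|\!|\lambda-\lambda'|\!|\!|$ for all $\lambda,\lambda'\in\lambda(\Theta)$, for some $\ell_\theta>0$ and some norm $|\!|\!|\cdot|\!|\!|$ on $\mathbb{R}^{SA}$.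
   Context: Finite MDP with states $\mathcal S$ ($S=|\mathcal S|$), actions $\mathcal A$ ($A=|\mathcal A|$), transitions $P_a$, initial distribution $\xi$, discount $\gamma\in(0,1)$. Policies $\pi_\theta$, $\theta\in\Theta\subset\mathbb{R}^d$; $\lambda(\theta)\in\mathbb{R}^{SA}$ is the occupancy measure $\lambda(\theta)_{sa}=\sum_{t\ge0}\gamma^t\mathbb P(s_t=s,a_t=a\mid\pi_\theta,s_0\sim\xi)$. $\hat\partial h(\theta)$ denotes the Fréchet superdifferential of $h$ at $\theta$. $\|\cdot\|$ is the Euclidean norm. *)

From HB Require Import structures.
From mathcomp Require Import all_boot all_order all_algebra.
From mathcomp Require Import all_classical all_reals all_analysis.
Set Implicit Arguments. Unset Strict Implicit. Unset Printing Implicit Defensive.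
Import Order.TTheory GRing.Theory Num.Theory.
Import numFieldNormedType.Exports.
Local Open Scope classical_set_scope.
Local Open Scope ring_scope.

Section Defs.
Variable R : realType.

Definition dotv d (u v : 'rV[R]_d) : R := \sum_(j < d) u 0 j * v 0 j.
Definition enorm d (x : 'rV[R]_d) : R := Num.sqrt (dotv x x).

(** A (general) norm on R^{S x A}, represented as S x A matrices. *)
Definition is_norm nS nA (N : 'M[R]_(nS, nA) -> R) : Prop :=
  [/\ forall x, 0 <= N x,
      forall x, N x = 0 -> x = 0,
      forall (c : R) x, N (c *: x) = `|c| * N x
    & forall x y, N (x + y) <= N x + N y].

Definition convex_subset (V : lmodType R) (C : set V) : Prop :=
  forall x y (t : R), C x -> C y -> 0 <= t <= 1 -> C ((1 - t) *: x + t *: y).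

Definition concave_on (V : lmodType R) (U : set V) (F : V -> R) : Prop :=
  forall x y (t : R), U x -> U y -> 0 <= t <= 1 -> U ((1 - t) *: x + t *: y) ->
    (1 - t) * F x + t * F y <= F ((1 - t) *: x + t *: y).

Definition frechet_superdiff d (D : set 'rV[R]_d) (h : 'rV[R]_d -> R)
    (th0 u : 'rV[R]_d) : Prop :=
  forall eps : R, 0 < eps -> exists2 delta : R, 0 < delta &
    forall th, D th -> enorm (th - th0) < delta ->
      h th - h th0 - dotv u (th - th0) <= eps * enorm (th - th0).

Definition stochastic m n (M : 'M[R]_(m, n)) : Prop :=
  (forall i j, 0 <= M i j) /\ (forall i, \sum_(j < n) M i j = 1).

(** Finite MDP: states 'I_nS, actions 'I_nA, transitions P a s s',
    initial distribution xi, discount gamma; policy pi s a. *)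
Definition policy_transition nS nA (P : 'I_nA -> 'M[R]_nS) (pi : 'M[R]_(nS, nA))
  : 'M[R]_nS := \matrix_(s, s') \sum_(a < nA) pi s a * P a s s'.

(** State distribution at time t: P(s_t = s) = (xi P_pi^t) s. *)
Definition state_dist nS nA (P : 'I_nA -> 'M[R]_nS) (xi : 'rV[R]_nS)
  (pi : 'M[R]_(nS, nA)) (t : nat) : 'rV[R]_nS :=
  iter t (fun mu => mu *m policy_transition P pi) xi.

Definition occupancy nS nA (P : 'I_nA -> 'M[R]_nS) (xi : 'rV[R]_nS) (gamma : R)
  (pi : 'M[R]_(nS, nA)) : 'M[R]_(nS, nA) :=
  \matrix_(s, a)
    limn (fun n => \sum_(0 <= t < n) gamma ^+ t * (state_dist P xi pi t 0 s * pi s a)).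

Definition jacobian_col d (V : normedModType R) (f : 'rV[R]_d -> V)
  (th : 'rV[R]_d) (j : 'I_d) : V := 'd f th (delta_mx 0 j).

End Defs.

From HB Require Import structures.
From mathcomp Require Import all_boot all_order all_algebra.
From mathcomp Require Import all_classical all_reals all_analysis.
From mathcomp Require Import lra.
Set Implicit Arguments. Unset Strict Implicit. Unset Printing Implicit Defensive.
Import Order.TTheory GRing.Theory Num.Theory.
Import numFieldNormedType.Exports.
Local Open Scope classical_set_scope.
Local Open Scope ring_scope.

(* Write l0 = lam th_star and l1 = lam th.  Because lam(Theta) is convex,
   every point l_t = (1 - t) l0 + t l1 of the segment is the image of
   th_t = g l_t in Theta, and the Lipschitz inverse g keeps th_t within
   distance t * C of th_star, where C = ell * N (l1 - l0).  Concavity of F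
   gives F l_t - F l0 >= t (F l1 - F l0), while the Fréchet supergradient
   together with stationarity gives F l_t - F l0 <= eps * t * C for small t.
   Dividing by t yields F l1 - F l0 <= eps * C for every eps > 0, hence
   F l1 <= F l0. *)

Lemma le0_of_le_eps_mul (R : realFieldType) (D C : R) :
  0 <= C -> (forall eps, 0 < eps -> D <= eps * C) -> D <= 0.
Proof.
move=> C0 DepsC; apply/ler_addgt0Pr => e e0; rewrite add0r.
have C1 : 0 < C + 1 by lra.
have := DepsC (e / (C + 1)) (divr_gt0 e0 C1).
have : e / (C + 1) * C <= e / (C + 1) * (C + 1).
  by rewrite ler_wpM2l ?divr_ge0 ?ltW //; lra.
rewrite divfK ?gt_eqF //; lra.
Qed.

Lemma small_step (R : realFieldType) (C delta : R) :
  0 <= C -> 0 < delta -> exists t, [/\ 0 < t, t <= 1 & t * C < delta].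
Proof.
move=> C0 delta0; have C1 : 0 < C + 1 by lra.
exists (Num.min 1 (delta / (C + 1))); split.
- by rewrite lt_min ltr01 divr_gt0.
- by rewrite ge_min lexx.
apply: (@le_lt_trans _ _ (delta / (C + 1) * C)).
  by rewrite ler_wpM2r // ge_min lexx orbT.
have : delta / (C + 1) * (C + 1) = delta by rewrite divfK ?gt_eqF.
have : 0 < delta / (C + 1) by rewrite divr_gt0.
nra.
Qed.

Lemma segment_offset (R : ringType) (V : lmodType R) (x y : V) (t : R) :
  (1 - t) *: x + t *: y - x = t *: (y - x).
Proof. by rewrite scalerBl scale1r scalerBr addrAC [x - _]addrC addrK addrC. Qed.

Lemma concave_segment_gain (R : realType) (V : lmodType R)
    (U : set V) (F : V -> R) (x y : V) (t : R) :
  concave_on U F -> U x -> U y -> 0 <= t <= 1 -> U ((1 - t) *: x + t *: y) ->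
  t * (F y - F x) <= F ((1 - t) *: x + t *: y) - F x.
Proof.
move=> concF Ux Uy t01 Ut; have := concF x y t Ux Uy t01 Ut; lra.
Qed.

Lemma stationary_sublinear (R : realType) d (D : set 'rV[R]_d)
    (h : 'rV[R]_d -> R) (th0 u : 'rV[R]_d) :
  frechet_superdiff D h th0 u -> (forall th, D th -> dotv u (th - th0) <= 0) ->
  forall eps, 0 < eps -> exists2 delta, 0 < delta &
    forall th, D th -> enorm (th - th0) < delta ->
      h th - h th0 <= eps * enorm (th - th0).
Proof.
move=> sup stat eps eps0; have [delta delta0 near_th0] := sup eps eps0.
exists delta => // th Dth close.
have := near_th0 th Dth close; have := stat th Dth; lra.
Qed.

Section HiddenConvexity.
Variables (R : realType) (d : nat) (V : lmodType R).
Variables (Theta : set 'rV[R]_d) (lam : 'rV[R]_d -> V) (g : V -> 'rV[R]_d).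
Variables (N : V -> R) (ell : R) (U : set V) (F : V -> R).

Hypothesis gK : forall th, Theta th -> g (lam th) = th.
Hypothesis N_ge0 : forall x, 0 <= N x.
Hypothesis N_homogeneous : forall (c : R) x, N (c *: x) = `|c| * N x.
Hypothesis ell_ge0 : 0 <= ell.
Hypothesis g_lipschitz : forall x y, (lam @` Theta) x -> (lam @` Theta) y ->
  enorm (g x - g y) <= ell * N (x - y).
Hypothesis image_convex : convex_subset (lam @` Theta).
Hypothesis image_sub_U : lam @` Theta `<=` U.
Hypothesis F_concave : concave_on U F.

(* The segment point l_t is the image of a parameter th_t within distance
   t * ell * N (l1 - l0) of th0, by convexity of lam(Theta) and the
   Lipschitz inverse. *)
Lemma segment_preimage th0 th1 t :
  Theta th0 -> Theta th1 -> 0 <= t <= 1 ->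
  let l_t := (1 - t) *: lam th0 + t *: lam th1 in
  exists2 th_t, Theta th_t /\ lam th_t = l_t &
    enorm (th_t - th0) <= t * (ell * N (lam th1 - lam th0)).
Proof.
move=> Th0 Th1 /[dup] t01 /andP[t0 _] l_t.
have L0 : (lam @` Theta) (lam th0) by exists th0.
have L1 : (lam @` Theta) (lam th1) by exists th1.
have [th_t Th_t lam_t] := image_convex L0 L1 t01.
exists th_t => //; have := g_lipschitz (ex_intro2 _ _ th_t Th_t lam_t) L0.
rewrite -lam_t !gK // lam_t segment_offset N_homogeneous ger0_norm //.
by rewrite mulrCA mulrA.
Qed.

Theorem stationary_global_max th_star u :
  Theta th_star -> frechet_superdiff Theta (F \o lam) th_star u ->
  (forall th, Theta th -> dotv u (th - th_star) <= 0) ->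
  forall th, Theta th -> F (lam th) <= F (lam th_star).
Proof.
move=> Ths sup stat th Th; rewrite -subr_le0.
set C := ell * N (lam th - lam th_star).
have C0 : 0 <= C by rewrite mulr_ge0.
apply: (le0_of_le_eps_mul C0) => eps eps0.
have [delta delta0 sublin] := stationary_sublinear sup stat eps0.
have [t [t0 t1 tC]] := small_step C0 delta0.
have t01 : 0 <= t <= 1 by rewrite ltW.
have [th_t [Th_t lam_t] dist_t] := segment_preimage Ths Th t01.
have L0 : (lam @` Theta) (lam th_star) by exists th_star.
have L1 : (lam @` Theta) (lam th) by exists th.
have gain := concave_segment_gain F_concave (image_sub_U L0) (image_sub_U L1) t01
  (image_sub_U (ex_intro2 _ _ th_t Th_t lam_t)).
have := sublin th_t Th_t (le_lt_trans dist_t tC); rewrite /= lam_t => loss.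
have close := ler_wpM2l (ltW eps0) dist_t.
rewrite -(ler_pM2l t0) mulrCA.
exact: le_trans gain (le_trans loss close).
Qed.

End HiddenConvexity.

Theorem theorem3 (R : realType) (nS nA d : nat)
  (P : 'I_nA -> 'M[R]_nS) (xi : 'rV[R]_nS) (gamma : R)
  (pi : 'rV[R]_d -> 'M[R]_(nS, nA)) (Theta : set 'rV[R]_d)
  (F : 'M[R]_(nS, nA) -> R) (th_star : 'rV[R]_d) :
  (forall a, stochastic (P a)) -> stochastic xi -> 0 < gamma < 1 ->
  (forall th, Theta th -> stochastic (pi th)) ->
  let lam := fun th => occupancy P xi gamma (pi th) in
  (* Assumption 1 (i) *)
  {in Theta &, injective lam} ->
  closed Theta -> convex_subset Theta ->
  closed (lam @` Theta) -> convex_subset (lam @` Theta) ->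
  (* Assumption 1 (ii) *)
  (forall th, Theta th -> differentiable lam th) ->
  (exists L : R, forall th th', Theta th -> Theta th' -> forall j : 'I_d,
     `|jacobian_col lam th j - jacobian_col lam th' j| <= L * enorm (th - th')) ->
  (* Assumption 1 (iii) *)
  (exists g : 'M[R]_(nS, nA) -> 'rV[R]_d,
     (forall th, Theta th -> g (lam th) = th) /\
     exists (N : 'M[R]_(nS, nA) -> R) (ell : R), is_norm N /\ 0 < ell /\
       forall x y, (lam @` Theta) x -> (lam @` Theta) y ->
         enorm (g x - g y) <= ell * N (x - y)) ->
  (* F concave and continuous on an open neighbourhood of lam(Theta) *)
  (exists U : set 'M[R]_(nS, nA), open U /\ lam @` Theta `<=` U /\
     {in U, continuous F} /\ concave_on U F) ->
  (* first-order stationarity of th_star *)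
  Theta th_star ->
  (exists u : 'rV[R]_d, frechet_superdiff Theta (F \o lam) th_star u /\
     forall th, Theta th -> dotv u (th - th_star) <= 0) ->
  (* global optimality *)
  forall th, Theta th -> F (lam th) <= F (lam th_star).
Proof.
move=> _ _ _ _ lam _ _ _ _ image_convex _ _.
move=> [g [gK [N [ell [[N_ge0 _ N_homogeneous _] [ell_gt0 g_lipschitz]]]]]].
move=> [U [_ [image_sub_U [_ F_concave]]]] Ths [u [sup stat]].
exact: (stationary_global_max gK N_ge0 N_homogeneous (ltW ell_gt0) g_lipschitz
  image_convex image_sub_U F_concave Ths sup stat).
Qed.
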